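(* Let $n\ge1$ and $1\le k\le n$. Let $\equiv$ be the equivalence relation on $\mathfrak S_n$ generated by the relations $cab\equiv cba$ and $abc\equiv acb$ for letters $a<b<c$ in three consecutive positions. Among the $\equiv$-classes of $\mathfrak S_n$, exactly $\binom{n-1}{k-1}$ are classes of permutations beginning with the letter $k$.
   Context: Permutations of $\mathfrak S_n$ are words $\sigma_1\cdots\sigma_n$; a relation such as $cab\equiv cba$ allows replacing three adjacent letters forming the pattern $cab$ by the same letters arranged as $cba$, and conversely. *)

From Stdlib Require Import Relations.
From mathcomp Require Import all_boot all_fingroup.
From mathcomp Require Import boolp.
Set Implicit Arguments. Unset Strict Implicit. Unset Printing Implicit Defensive.

Definition word n (s : {perm 'I_n}) : seq nat :=
  [seq (s i).+1 | i <- enum 'I_n].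

Definition elem_move (w w' : seq nat) : Prop :=
  exists (u v : seq nat) (a b c : nat), a < b < c /\
    ((w = u ++ [:: c; a; b] ++ v /\ w' = u ++ [:: c; b; a] ++ v) \/
     (w = u ++ [:: a; b; c] ++ v /\ w' = u ++ [:: a; c; b] ++ v)).

Definition perm_equiv n (s t : {perm 'I_n}) : Prop :=
  clos_refl_sym_trans _ (fun x y => elem_move (word x) (word y)) s t.

Definition equiv_class n (s : {perm 'I_n}) : {set {perm 'I_n}} :=
  [set t | `[< perm_equiv s t >]].

Definition equiv_classes n : {set {set {perm 'I_n}}} :=
  [set equiv_class s | s : {perm 'I_n}].

From Stdlib Require Import Relations.
From mathcomp Require Import all_boot all_fingroup boolp zify.
Set Implicit Arguments. Unset Strict Implicit. Unset Printing Implicit Defensive.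

(* Both relations exchange two adjacent letters [y z] standing right after a letter that is
   smaller or larger than both; by induction such an exchange is allowed as soon as ANY
   earlier letter is smaller or larger than both.  The classes are then separated by a
   complete invariant, the min-max code: repeatedly compare the positions of the least and
   the greatest remaining letter, record which one comes first and discard the later one.
   Moves do not change the code, and conversely every word is equivalent to a canonical
   word built from its code, because the discarded extreme can be pushed past all the
   letters after it (they all lie between it and the other extreme).  Every string of
   n-1 bits is a code, and the first letter of a permutation is one more than the number
   of times its minimum was discarded; so the classes beginning with k correspond to the
   (k-1)-subsets of an (n-1)-set. *)

Definition word_equiv := clos_refl_sym_trans (seq nat) elem_move.

Lemma word_equiv_catr w w' s : word_equiv w w' -> word_equiv (w ++ s) (w' ++ s).
Proof.
elim=> [x y [u [v [a [b [c [abc moves]]]]]]|x|x y _|x y z _ + _];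
  [|apply: rst_refl|apply: rst_sym|apply: rst_trans].
apply: rst_step; exists u, (v ++ s), a, b, c; split=> //.
by case: moves => -[-> ->]; [left|right]; rewrite -!catA.
Qed.

Lemma elem_move_perm_eq w w' : elem_move w w' -> perm_eq w w'.
Proof.
case=> [u [v [a [b [c [_ [[-> ->]|[-> ->]]]]]]]];
  by rewrite perm_cat2l perm_cat2r perm_cons (perm_catC [:: _]).
Qed.

Lemma word_equiv_perm_eq w w' : word_equiv w w' -> perm_eq w w'.
Proof.
elim=> [x y /elem_move_perm_eq //|x|x y _|x y z _ + _]; first exact: perm_refl.
- by rewrite perm_sym.
- exact: perm_trans.
Qed.

Lemma word_equiv_invariant (T : Type) (f : seq nat -> T) (P : pred (seq nat)) :
  (forall w w', perm_eq w w' -> P w = P w') ->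
  (forall w w', elem_move w w' -> P w -> f w = f w') ->
  forall w w', word_equiv w w' -> P w -> f w = f w'.
Proof.
move=> P_perm f_move w w'.
elim=> [x y /f_move //|//|x y /word_equiv_perm_eq/P_perm Pxy IH|x y z + IHxy _ IHyz].
- by rewrite -Pxy => /IH.
- by move=> /word_equiv_perm_eq/P_perm Pxy Px; rewrite IHxy // IHyz // -Pxy.
Qed.

Lemma word_equiv_head w w' : word_equiv w w' -> head 0 w = head 0 w'.
Proof.
move=> ww'; apply: (word_equiv_invariant (P := predT)) ww' _ => // x y.
by case=> [u [v [a [b [c [_ [[-> ->]|[-> ->]]]]]]]]; case: u.
Qed.

(** * Swaps behind an outside letter *)

(* The two relations are exactly the swaps of [y z] in [x y z] with [outside x y z]. *)
Definition outside (e y z : nat) := ((e < y) && (e < z)) || ((y < e) && (z < e)).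

Lemma swap_after_outside u x y z v : outside x y z -> y != z ->
  word_equiv (u ++ x :: y :: z :: v) (u ++ x :: z :: y :: v).
Proof.
wlog lt_yz : y z / y < z => [hwlog oxyz nyz|].
  case: (ltngtP y z) => [lt_yz|lt_zy|eq_yz]; first exact: hwlog.
    apply: rst_sym; apply: hwlog => //; last by rewrite eq_sym.
    by move: oxyz; rewrite /outside; lia.
  by rewrite eq_yz eqxx in nyz.
case/orP=> /andP[xy xz] _; apply: rst_step; exists u, v.
- by exists x, y, z; split; [rewrite xy lt_yz | right].
- by exists y, z, x; split; [rewrite lt_yz xz | left].
Qed.

Lemma swap_after_outside_mem u y z v e : e \in u -> outside e y z -> uniq [:: y, z & u] ->
  word_equiv (u ++ y :: z :: v) (u ++ z :: y :: v).
Proof.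
elim/last_ind: u y z v => [//|u x IH] y z v eux oe.
rewrite -[[:: y, z & _]]/(rcons [:: y, z & u] x) rcons_uniq /= !inE !negb_or -!andbA.
move=> /and5P[nxy nxz nxu nyz /and3P[nyu nzu uu]].
rewrite -cats1 -!catA /=.
have [ox|] := boolP (outside x y z); first exact: swap_after_outside.
move=> /negP nox; have eu : e \in u.
  by move: eux; rewrite mem_rcons inE => /orP[/eqP ex|//]; rewrite -ex in nox.
have U : forall a b, a \notin u -> b \notin u -> a != b -> uniq [:: a, b & u].
  by move=> a b au bu ab; rewrite /= inE negb_or ab au bu uu.
move: nox; rewrite /outside => nox.
(* Now [x] lies strictly between [y] and [z], so [e] is outside [x y] and [z x] as well:
   [x y z] -> [y x z] -> [y z x] -> [z y x] -> [z x y] -> [x z y], swapping alternately by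
   induction and behind the outside letters [y] and [z]. *)
apply: rst_trans (IH x y (z :: v) eu _ (U _ _ nxu nyu nxy)) _.
  by move: oe; rewrite /outside; lia.
apply: rst_trans (swap_after_outside _ _ _ _) _; [by rewrite /outside; lia | by [] |].
apply: rst_trans (IH y z (x :: v) eu oe (U _ _ nyu nzu nyz)) _.
apply: rst_trans (swap_after_outside _ _ _ _) _; [by rewrite /outside; lia | by rewrite eq_sym |].
apply: IH eu _ (U _ _ nzu nxu _); last by rewrite eq_sym.
by move: oe; rewrite /outside; lia.
Qed.

Lemma move_to_end u e M v : e \in u -> all (outside e M) v -> uniq (u ++ M :: v) ->
  word_equiv (u ++ M :: v) (u ++ v ++ [:: M]).
Proof.
elim: v u => [|y v IH] u eu /=; first by move=> _ _; apply: rst_refl.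
case/andP=> oMy ov uMyv.
have uyMv : uniq (u ++ y :: M :: v).
  rewrite (perm_uniq (_ : perm_eq _ (u ++ M :: y :: v))) // perm_cat2l.
  by apply/permPl; exact: (perm_catCA [:: y] [:: M]).
have uMyu : uniq [:: M, y & u].
  have pMy : perm_eq (u ++ [:: M; y] ++ v) ([:: M; y] ++ u ++ v) by apply/permPl/perm_catCA.
  by move: uMyv; rewrite (perm_uniq pMy) catA cat_uniq => /andP[].
apply: rst_trans (swap_after_outside_mem v eu oMy uMyu) _.
by rewrite -!(cat_rcons y u); apply: IH; rewrite ?cat_rcons // mem_rcons inE eu orbT.
Qed.

(** * The min-max code *)

(* Stage [i] of the code looks at the letters of [w] in the current range [L, H]: bit [i]
   says whether the least of them occurs before the greatest, and the later of the two is
   then dropped from the range.  Only relative positions in [w] are compared, so the dropped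
   letters never need to be deleted from [w]. *)
Fixpoint minmax_code (d L H : nat) (w : seq nat) : seq bool :=
  if d is d'.+1 then
    if index L w < index H w then true :: minmax_code d' L H.-1 w
    else false :: minmax_code d' L.+1 H w
  else [::].

Lemma size_minmax_code d L H w : size (minmax_code d L H w) = d.
Proof. by elim: d L H => [//|d IH] L H /=; case: ifP; rewrite /= IH. Qed.

Lemma index_swap_ltn (u v : seq nat) (y z a b : nat) : uniq (u ++ y :: z :: v) ->
  (a, b) != (y, z) -> (a, b) != (z, y) ->
  (index a (u ++ y :: z :: v) < index b (u ++ y :: z :: v)) =
  (index a (u ++ z :: y :: v) < index b (u ++ z :: y :: v)).
Proof.
rewrite cat_uniq /= => /and3P[_ /norP[yu /norP[zu _]] /andP[]].
rewrite inE negb_or => /andP[nyz _] _; rewrite !xpair_eqE !index_cat /=.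
have := index_mem a u; have := index_mem b u; set m := size u.
by case: (a \in u); case: (b \in u) => //; do !case: eqP => ?; subst; lia.
Qed.

Lemma mem_prefix_before (u r : seq nat) e f :
  e \in u -> index f (u ++ r) <= index e (u ++ r) -> f \in u.
Proof.
move=> eu; rewrite !index_cat eu; case: ifP => // _.
by have := index_mem e u; rewrite eu; set m := size u; lia.
Qed.

Lemma minmax_code_swap (u v : seq nat) y z d L H : uniq (u ++ y :: z :: v) -> L + d = H ->
  ((L <= y <= H) && (L <= z <= H) -> exists2 e, e \in u & (L <= e <= H) && outside e y z) ->
  minmax_code d L H (u ++ y :: z :: v) = minmax_code d L H (u ++ z :: y :: v).
Proof.
move=> uw; have [yu zu] : y \notin u /\ z \notin u.
  by move: uw; rewrite cat_uniq /= => /and3P[_ /norP[-> /norP[-> _]] _].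
elim: d L H => [//|d IH] L H HLd witness /=.
rewrite index_swap_ltn //; last 2 first.
- rewrite xpair_eqE; apply/andP => -[/eqP ? /eqP ?]; subst y z.
  have [|e _ /andP[eLH]] := witness; first by lia.
  by rewrite /outside; lia.
- rewrite xpair_eqE; apply/andP => -[/eqP ? /eqP ?]; subst y z.
  have [|e _ /andP[eLH]] := witness; first by lia.
  by rewrite /outside; lia.
have other_extreme f : f \in u -> L <= f <= H -> (L <= y <= H) && (L <= z <= H) ->
    (f == L) || (f == H) -> outside f y z.
  move=> fu; have := memPn yu f fu; have := memPn zu f fu; rewrite /outside; lia.
case: ifP => LH; congr (_ :: _); apply: IH; [lia | move=> yzr | lia | move=> yzr].
(* When the witness [e] is dropped, the other extreme precedes it, hence lies in [u]. *)
- have [|e eu /andP[eLH oe]] := witness; first by lia.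
  have [eH|eH] := ltnP e H; first by exists e; rewrite // oe andbT; lia.
  have Lu : L \in u.
    apply: (mem_prefix_before (r := z :: y :: v) eu).
    by rewrite (_ : e = H); [exact: ltnW | lia].
  by exists L => //; rewrite other_extreme ?eqxx //; lia.
- have [|e eu /andP[eLH oe]] := witness; first by lia.
  have [eL|eL] := ltnP L e; first by exists e; rewrite // oe andbT; lia.
  have Hu : H \in u.
    apply: (mem_prefix_before (r := z :: y :: v) eu).
    by rewrite (_ : e = L); [rewrite leqNgt LH | lia].
  by exists H => //; rewrite other_extreme ?eqxx ?orbT //; lia.
Qed.

Lemma minmax_code_move w w' d L H : L + d = H -> elem_move w w' ->
  uniq w -> all (fun x => L <= x <= H) w -> minmax_code d L H w = minmax_code d L H w'.
Proof.
move=> HLd [u [v [a [b [c [abc [[-> ->]|[-> ->]]]]]]]] uw;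
  rewrite all_cat /= => /and4P[_ xr yr zr].
- rewrite -!(cat_rcons c u); apply: minmax_code_swap; rewrite ?cat_rcons // => _.
  by exists c; rewrite ?mem_rcons ?mem_head // xr /outside; lia.
- rewrite -!(cat_rcons a u); apply: minmax_code_swap; rewrite ?cat_rcons // => _.
  by exists a; rewrite ?mem_rcons ?mem_head // xr /outside; lia.
Qed.

Lemma minmax_code_equiv w w' d L H : L + d = H -> word_equiv w w' ->
  uniq w -> all (fun x => L <= x <= H) w -> minmax_code d L H w = minmax_code d L H w'.
Proof.
move=> HLd ww' uw rw; pose P w := uniq w && all (fun x => L <= x <= H) w.
have P_perm x y : perm_eq x y -> P x = P y by move=> xy; rewrite /P (perm_uniq xy) (perm_all _ xy).
have code_move x y : elem_move x y -> P x -> minmax_code d L H x = minmax_code d L H y.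
  by move=> xy /andP[]; apply: minmax_code_move.
by apply: (word_equiv_invariant P_perm code_move ww'); rewrite /P uw.
Qed.

Lemma word_equiv_rcons_rem w e M : uniq w -> M \in w -> index e w < index M w ->
  {in w, forall y, y != e -> outside e M y} -> word_equiv w (rcons (rem M w) M).
Proof.
move=> + Mw; case/splitPr: Mw => u v uw.
have Mu : M \notin u by move: uw; rewrite cat_uniq /= => /and3P[_ /norP[] //].
have -> : rem M (u ++ M :: v) = u ++ v.
  by elim: u Mu {uw} => [|y u IH]; rewrite /= ?eqxx // inE eq_sym => /norP[/negbTE -> /IH ->].
move=> eM out_eM; have eu : e \in u.
  by move: eM; rewrite !index_cat (negbTE Mu) /= eqxx; case: ifP => // _; set m := size u; lia.
have ev : e \notin v.
  move: uw; rewrite cat_uniq => /and3P[_ /hasPn notu _].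
  by apply: contraL eu => ev; apply: notu; rewrite inE ev orbT.
rewrite -cats1 -catA; apply: (move_to_end eu _ uw); apply/allP => y yv.
by apply: out_eM; [rewrite mem_cat inE yv !orbT | apply: contraNneq ev => <-].
Qed.

(* Reading a code backwards: each dropped extreme is written after the letters that remain. *)
Fixpoint canon_word (L H : nat) (bs : seq bool) : seq nat :=
  if bs is b :: bs' then
    if b then rcons (canon_word L H.-1 bs') H else rcons (canon_word L.+1 H bs') L
  else [:: L].

Lemma iotaSr L d : iota L d.+1 = rcons (iota L d) (L + d).
Proof. by rewrite -cats1 -addn1 iotaD. Qed.

Lemma canon_word_perm bs L H : L + size bs = H ->
  perm_eq (canon_word L H bs) (iota L (size bs).+1).
Proof.
elim: bs L H => [//|[] bs IH] L H /= HL.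
- rewrite -[L :: _]/(iota L (size bs).+2) iotaSr (_ : L + _ = H); last by lia.
  by rewrite -!cats1 perm_cat2r IH //; lia.
- by rewrite perm_rcons perm_cons IH //; lia.
Qed.

Lemma head_canon_word bs L H x0 : head x0 (canon_word L H bs) = L + count negb bs.
Proof.
by elim: bs L H x0 => [|[] bs IH] L H x0; rewrite /= ?addn0 // headI /= IH; lia.
Qed.

Lemma minmax_code_catr d L H (w s : seq nat) : L + d = H -> {subset iota L d.+1 <= w} ->
  minmax_code d L H (w ++ s) = minmax_code d L H w.
Proof.
elim: d L H => [//|d IH] L H HL sub /=.
have idx x : L <= x <= H -> index x (w ++ s) = index x w.
  by move=> xr; rewrite index_cat sub // mem_iota; lia.
have sub_iota L' : L <= L' <= L.+1 -> {subset iota L' d.+1 <= w}.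
  by move=> L'r x; rewrite mem_iota => xr; apply: sub; rewrite mem_iota; lia.
rewrite !idx; [|lia|lia].
by case: ifP => _; congr (_ :: _); apply: IH; try lia; apply: sub_iota; lia.
Qed.

Lemma minmax_code_rcons_max d L H w : L + d.+1 = H -> perm_eq w (iota L d.+1) ->
  minmax_code d.+1 L H (rcons w H) = true :: minmax_code d L H.-1 w.
Proof.
move=> HL pw; have Lw : L \in w by rewrite (perm_mem pw) mem_iota; lia.
have Hw : H \notin w by rewrite (perm_mem pw) mem_iota; lia.
rewrite /= -cats1 !index_cat Lw (negbTE Hw) /= eqxx addn0 index_mem Lw.
by rewrite minmax_code_catr // => [|x]; [lia | rewrite (perm_mem pw)].
Qed.

Lemma minmax_code_rcons_min d L H w : L + d.+1 = H -> perm_eq w (iota L.+1 d.+1) ->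
  minmax_code d.+1 L H (rcons w L) = false :: minmax_code d L.+1 H w.
Proof.
move=> HL pw; have Lw : L \notin w by rewrite (perm_mem pw) mem_iota; lia.
have Hw : H \in w by rewrite (perm_mem pw) mem_iota; lia.
rewrite /= -cats1 !index_cat Hw (negbTE Lw) /= eqxx addn0 ltnNge ltnW ?index_mem //=.
by rewrite minmax_code_catr // => [|x]; [lia | rewrite (perm_mem pw)].
Qed.

Lemma minmax_code_canon_word bs L H : L + size bs = H ->
  minmax_code (size bs) L H (canon_word L H bs) = bs.
Proof.
elim: bs L H => [//|[] bs IH] L H; rewrite [size _]/= => HL.
- by rewrite minmax_code_rcons_max ?canon_word_perm ?IH //; lia.
- by rewrite minmax_code_rcons_min ?canon_word_perm ?IH //; lia.
Qed.

Lemma word_equiv_canon_word d L H w : L + d = H -> perm_eq w (iota L d.+1) ->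
  word_equiv w (canon_word L H (minmax_code d L H w)).
Proof.
elim: d L H w => [|d IH] L H w HL pw; first by rewrite (perm_small_eq _ pw) //; apply: rst_refl.
have uw : uniq w by rewrite (perm_uniq pw) iota_uniq.
have rw : all (fun x => L <= x <= H) w by apply/allP => x; rewrite (perm_mem pw) mem_iota; lia.
have [Lw Hw] : L \in w /\ H \in w by rewrite !(perm_mem pw) !mem_iota; split; lia.
have [LH|HL'|/(index_inj 0 Lw Hw)] := ltngtP (index L w) (index H w); last by lia.
- have pw' : perm_eq (rem H w) (iota L d.+1).
    have := perm_to_rem Hw; rewrite perm_sym (permPr pw) iotaSr (_ : L + d.+1 = H) //.
    by rewrite perm_sym perm_rcons perm_cons perm_sym.
  have ww' : word_equiv w (rcons (rem H w) H).
    by apply: word_equiv_rcons_rem LH _ => // y /(allP rw) yr yL; rewrite /outside; lia.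
  rewrite (minmax_code_equiv HL ww' uw rw) minmax_code_rcons_max //=.
  by apply: rst_trans ww' _; rewrite -!cats1; apply/word_equiv_catr/IH => //; lia.
- have pw' : perm_eq (rem L w) (iota L.+1 d.+1).
    by have := perm_to_rem Lw; rewrite perm_sym (permPr pw) perm_cons perm_sym.
  have ww' : word_equiv w (rcons (rem L w) L).
    by apply: word_equiv_rcons_rem HL' _ => // y /(allP rw) yr yH; rewrite /outside; lia.
  rewrite (minmax_code_equiv HL ww' uw rw) minmax_code_rcons_min //=.
  by apply: rst_trans ww' _; rewrite -!cats1; apply/word_equiv_catr/IH => //; lia.
Qed.

Section PermutationWords.

Variable n : nat.
Implicit Types r s t : {perm 'I_n}.

Lemma word_perm_iota s : perm_eq (word s) (iota 1 n).
Proof.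
apply: uniq_perm; first by rewrite map_inj_uniq ?enum_uniq // => i j [/val_inj/perm_inj].
  exact: iota_uniq.
move=> x; rewrite mem_iota; apply/mapP/idP => [[i _ ->]|xr]; first by have := ltn_ord (s i); lia.
have xn : x.-1 < n by lia.
by exists ((s^-1)%g (Ordinal xn)); rewrite ?mem_enum // permKV /=; lia.
Qed.

Lemma word_inj : injective (@word n).
Proof.
by move=> s t /eq_in_map st; apply/permP => i; have /(_ (mem_enum _ i))[/val_inj] := st i.
Qed.

Lemma word_surj w : perm_eq w (iota 1 n) -> exists s, w = word s.
Proof.
move=> pw; have uw : uniq w by rewrite (perm_uniq pw) iota_uniq.
have sw : size w = n by rewrite (perm_size pw) size_iota.
have wr (i : 'I_n) : 0 < nth 0 w i <= n.
  have : nth 0 w i \in w by rewrite mem_nth // sw.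
  by rewrite (perm_mem pw) mem_iota; lia.
pose f (i : 'I_n) := insubd i (nth 0 w i).-1.
have fE i : val (f i) = (nth 0 w i).-1 by rewrite /f insubdK //; have := wr i; lia.
have f_inj : injective f.
  move=> i j /(congr1 val); rewrite !fE => eq_ij; apply/val_inj/eqP.
  by rewrite -(nth_uniq 0 _ _ uw) ?sw ?ltn_ord //=; have := wr i; have := wr j; lia.
exists (perm f_inj); rewrite /word -[LHS](mkseq_nth 0) sw /mkseq -val_enum_ord -map_comp.
by apply: eq_map => i /=; rewrite permE fE; have := wr i; lia.
Qed.

Lemma perm_equiv_word_equiv s t : perm_equiv s t <-> word_equiv (word s) (word t).
Proof.
split=> [|ww'].
  by elim=> [x y|x|x y _|x y z _ + _];
    [apply: rst_step|apply: rst_refl|apply: rst_sym|apply: rst_trans].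
have [[w ws] [w' wt]] : (exists w, w = word s) /\ (exists w', w' = word t) by split; eexists.
rewrite -ws -wt in ww'; elim: ww' s t ws wt => [x y xy|x|x y _ IH|x y z xy IHxy _ IHyz] s t ws wt.
- by apply: rst_step; rewrite -ws -wt.
- by rewrite (word_inj (etrans (esym ws) wt)); apply: rst_refl.
- by apply: rst_sym; apply: IH.
- have [r yr] : exists r, y = word r.
    by apply: word_surj; rewrite -(permPl (word_equiv_perm_eq xy)) ws word_perm_iota.
  exact: rst_trans (IHxy s r ws yr) (IHyz r t yr wt).
Qed.

Definition perm_code s := minmax_code n.-1 1 n (word s).

Lemma size_perm_code s : size (perm_code s) = n.-1.
Proof. exact: size_minmax_code. Qed.

Hypothesis n_gt0 : 0 < n.

Let n_range : 1 + n.-1 = n. Proof. by rewrite add1n prednK. Qed.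

Let word_equiv_canon r : word_equiv (word r) (canon_word 1 n (perm_code r)).
Proof. by apply: word_equiv_canon_word; rewrite // prednK ?word_perm_iota. Qed.

Lemma perm_equiv_code s t : perm_equiv s t <-> perm_code s = perm_code t.
Proof.
have uw r : uniq (word r) by rewrite (perm_uniq (word_perm_iota r)) iota_uniq.
have rw r : all (fun x => 1 <= x <= n) (word r).
  by apply/allP => x; rewrite (perm_mem (word_perm_iota r)) mem_iota; lia.
rewrite perm_equiv_word_equiv; split=> [st|eq_st]; first exact: minmax_code_equiv.
by apply: rst_trans (word_equiv_canon s) _; rewrite eq_st; apply/rst_sym/word_equiv_canon.
Qed.

Lemma head_word_code s : head 0 (word s) = (count negb (perm_code s)).+1.
Proof.
by rewrite (word_equiv_head (word_equiv_canon s)) head_canon_word.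
Qed.

Lemma perm_code_surj bs : size bs = n.-1 -> exists s, perm_code s = bs.
Proof.
move=> sbs; have [s ws] : exists s, canon_word 1 n bs = word s.
  by apply: word_surj; rewrite -[n in iota 1 n]prednK // -sbs canon_word_perm // sbs.
by exists s; rewrite /perm_code -ws -sbs minmax_code_canon_word // sbs.
Qed.

End PermutationWords.

(** * Counting the classes *)

Lemma card_imset_eq_kernel (T U V : finType) (f : T -> U) (g : T -> V) (A : {set T}) :
  {in A &, forall x y, (f x == f y) = (g x == g y)} -> #|f @: A| = #|g @: A|.
Proof.
move=> fg; pose fgp x := (f x, g x).
have card_proj (W : finType) (h : T -> W) (p : U * V -> W) : h =1 p \o fgp ->
    {in A &, forall x y, h x = h y -> fgp x = fgp y} -> #|h @: A| = #|fgp @: A|.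
  move=> hE hinj; rewrite (eq_imset _ hE) imset_comp card_in_imset //.
  by move=> _ _ /imsetP[x xA ->] /imsetP[y yA ->]; move: (hE x) (hE y) => /= <- <-; apply: hinj.
rewrite (card_proj _ _ fst) ?(card_proj _ _ snd) // => x y xA yA.
- move=> gxy; have /eqP fxy : f x == f y by rewrite fg ?gxy.
  by rewrite /fgp fxy gxy.
- move=> fxy; have /eqP gxy : g x == g y by rewrite -fg ?fxy.
  by rewrite /fgp fxy gxy.
Qed.

Definition false_positions m (bs : seq bool) : {set 'I_m} := [set i : 'I_m | ~~ nth true bs i].

Lemma card_false_positions m bs : size bs = m -> #|false_positions m bs| = count negb bs.
Proof.
move=> sbs; rewrite cardsE cardE size_filter -(count_map val (fun i : nat => ~~ nth true bs i)).
by rewrite -enumT val_enum_ord -[in RHS](mkseq_nth true bs) sbs count_map.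
Qed.

Lemma false_positions_inj m bs bs' : size bs = m -> size bs' = m ->
  false_positions m bs = false_positions m bs' -> bs = bs'.
Proof.
move=> sbs sbs' /setP eq_pos; apply: (eq_from_nth (x0 := true)) => [|i]; first by rewrite sbs sbs'.
by rewrite sbs => im; have := eq_pos (Ordinal im); rewrite !inE => /negb_inj.
Qed.

Lemma false_positions_surj m (A : {set 'I_m}) :
  exists2 bs, size bs = m & false_positions m bs = A.
Proof.
exists [seq i \notin A | i <- enum 'I_m]; first by rewrite size_map size_enum_ord.
by apply/setP => i; rewrite inE (nth_map i) ?size_enum_ord // nth_ord_enum negbK.
Qed.

Section Classes.

Variable n : nat.
Implicit Types s t : {perm 'I_n}.

Lemma equiv_class_eq s t : equiv_class s = equiv_class t <-> perm_equiv s t.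
Proof.
split=> [eq_st|st].
  have : t \in equiv_class t by rewrite inE; apply/asboolP/rst_refl.
  by rewrite -eq_st inE => /asboolP.
apply/setP => r; rewrite !inE; apply/asboolP/asboolP => [sr|tr].
- exact: rst_trans (rst_sym _ _ _ _ st) sr.
- exact: rst_trans st tr.
Qed.

Lemma classes_with_head k :
  [set C in equiv_classes n | [forall t in C, head 0 (word t) == k]] =
  @equiv_class n @: [set s : {perm 'I_n} | head 0 (word s) == k].
Proof.
have head_class s t : t \in equiv_class s -> head 0 (word t) = head 0 (word s).
  by rewrite inE => /asboolP/perm_equiv_word_equiv/word_equiv_head.
apply/setP => C; rewrite inE; apply/andP/imsetP => [[/imsetP[s _ ->] /forall_inP hs]|[s]].
  by exists s; rewrite // inE hs // inE; apply/asboolP/rst_refl.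
rewrite inE => /eqP hs ->; split; first exact: imset_f.
by apply/forall_inP => t /head_class ->; apply/eqP.
Qed.

Hypothesis n_gt0 : 0 < n.

Lemma false_positions_code_image k : 0 < k ->
  [set false_positions n.-1 (perm_code s) | s in [set s : {perm 'I_n} | head 0 (word s) == k]] =
  [set A : {set 'I_n.-1} | #|A| == k.-1].
Proof.
move=> k_gt0; apply/setP => A; rewrite inE; apply/imsetP/eqP => [[s]|cardA].
  by rewrite inE head_word_code // => /eqP <- ->; rewrite card_false_positions ?size_perm_code.
have [bs sbs posA] := false_positions_surj A; have [s sbs'] := perm_code_surj n_gt0 sbs.
exists s; last by rewrite sbs' posA.
by rewrite inE head_word_code // sbs' -(card_false_positions sbs) posA cardA prednK.
Qed.

End Classes.

Theorem mainTheorem10 (n k : nat) (hn : 1 <= n) (hk1 : 1 <= k) (hkn : k <= n) :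
  #|[set C in equiv_classes n | [forall t in C, head 0 (word t) == k]]|
  = 'C(n - 1, k - 1).
Proof.
rewrite classes_with_head (card_imset_eq_kernel (g := fun s => false_positions n.-1 (perm_code s))).
  by rewrite false_positions_code_image // card_draws card_ord !subn1.
move=> s t _ _; apply/eqP/eqP => [/equiv_class_eq/(perm_equiv_code hn) -> //|].
move/false_positions_inj; rewrite !size_perm_code => /(_ erefl erefl).
by move/(perm_equiv_code hn)/equiv_class_eq.
Qed.
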